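(* Let $k\ge 2$ and let $T\in\mathbb{R}^{n_1\times\cdots\times n_k}$ admit a decomposition \[ T=\sum_{i=1}^r x_i^{(1)}\otimes\cdots\otimes x_i^{(k)},\qquad x_i^{(j)}\in\mathbb{R}^{n_j}\setminus\{0\}. \] Suppose there is a parameter $\mu$ with $r\mu\le \tfrac12\min_j n_j$ such that for every $j\in[k]$, \[ \sup_{i\in[r]}\frac{\|x_i^{(j)}\|_\infty^2}{\|x_i^{(j)}\|_2^2}\le\frac{\mu}{n_j},\qquad \sup_{i\ne i'\in[r]}\frac{|\langle x_i^{(j)},x_{i'}^{(j)}\rangle|}{\|x_i^{(j)}\|_2\,\|x_{i'}^{(j)}\|_2}\le\frac{\mu}{n_j}. \] Then $T$ is $(\mu_1,\mu_2)$-incoherent (in the tensor sense defined in the context) with $\mu_1\le 2\mu$ and $\mu_2\le 2\mu^{k-1}$.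
   Context: For $T\in\mathbb{R}^{n_1\times\cdots\times n_k}$ and $j\in[k]$, the mode-$j$ unfolding $\operatorname{unfold}_j(T)\in\mathbb{R}^{n_j\times m_j}$, $m_j=\prod_{\ell\ne j}n_\ell$, is defined by $[\operatorname{unfold}_j(T)]_{i_j,(i_1,\dots,i_{j-1},i_{j+1},\dots,i_k)}=T_{i_1,\dots,i_k}$. For a matrix $U$, $\|U\|_{2,\infty}=\max_i\|U_{i,\cdot}\|_2$ (maximum row Euclidean norm). The tensor $T$ is called $(\mu_1,\mu_2)$-incoherent if for every $j\in[k]$, writing the (compact) SVD $\operatorname{unfold}_j(T)=U^{(j)}\Sigma^{(j)}(V^{(j)})^\top$ with $U^{(j)}\in\mathbb{R}^{n_j\times r_j}$, $V^{(j)}\in\mathbb{R}^{m_j\times r_j}$, $r_j=\operatorname{rank}(\operatorname{unfold}_j(T))$, one has $\|U^{(j)}\|_{2,\infty}^2\le \mu_1 r_j/n_j$ and $\|V^{(j)}\|_{2,\infty}^2\le \mu_2 r_j/m_j$. *)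

From HB Require Import structures.
From mathcomp Require Import all_boot all_order all_algebra.
From mathcomp Require Import reals.
Set Implicit Arguments. Unset Strict Implicit. Unset Printing Implicit Defensive.
Import Order.TTheory GRing.Theory Num.Theory.
Local Open Scope ring_scope.

Section Tensors.
Variable R : realType.
Variables (k : nat) (n : 'I_k -> nat).

Definition midx := forall l : 'I_k, 'I_(n l).

Definition tensor := midx -> R.

(* Column indices of the mode-j unfolding: all indices except the j-th,
   encoded as a multi-index whose j-th coordinate ranges over 'I_1. *)
Definition colidx (j : 'I_k) :=
  {dffun forall l : 'I_k, 'I_(if l == j then 1%N else n l)}.

Lemma colidx_dim (j l : 'I_k) : j != l -> (if l == j then 1%N else n l) = n l.
Proof. by rewrite eq_sym => /negbTE ->. Qed.

Definition ins_idx (j : 'I_k) (a : 'I_(n j)) (c : colidx j) : midx :=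
  fun l => match eqVneq j l with
           | EqNotNeq e => ecast l 'I_(n l) e a
           | NeqNotEq ne => cast_ord (colidx_dim ne) (c l)
           end.

Definition mdim (j : 'I_k) : nat := (\prod_(l < k | l != j) n l)%N.

Lemma card_colidx (j : 'I_k) : #|{: colidx j}| = mdim j.
Proof.
rewrite card_dep_ffun /mdim foldrE big_map big_enum /=.
rewrite (bigD1 j) //= eqxx card_ord mul1n.
by apply: eq_bigr => l /negbTE ->; rewrite card_ord.
Qed.

(* The mode-j unfolding; columns are enumerated in the canonical (enum)
   order of the remaining multi-indices. *)
Definition unfold (T : tensor) (j : 'I_k) : 'M[R]_(n j, mdim j) :=
  \matrix_(a, b) T (ins_idx a (enum_val (cast_ord (esym (card_colidx j)) b))).

End Tensors.

Definition sqnorm2inf (R : realType) (p q : nat) (U : 'M[R]_(p, q)) : R :=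
  \big[Num.max/0]_(i < p) \sum_(b < q) U i b ^+ 2.

(* A = U diag(s) V^T is a compact SVD: U, V with orthonormal columns,
   positive singular values s (r = number of columns = rank A). *)
Definition compact_svd (R : realType) (p q r : nat) (A : 'M[R]_(p, q))
  (U : 'M[R]_(p, r)) (s : 'rV[R]_r) (V : 'M[R]_(q, r)) : Prop :=
  [/\ U^T *m U = 1%:M, V^T *m V = 1%:M, (forall i, 0 < s 0 i)
    & A = U *m diag_mx s *m V^T].

Definition incoherent (R : realType) (k : nat) (n : 'I_k -> nat)
  (T : tensor R n) (mu1 mu2 : R) : Prop :=
  forall (j : 'I_k) (U : 'M[R]_(n j, \rank (unfold T j)))
    (s : 'rV[R]_(\rank (unfold T j))) (V : 'M[R]_(mdim n j, \rank (unfold T j))),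
    compact_svd (unfold T j) U s V ->
    sqnorm2inf U <= mu1 * (\rank (unfold T j))%:R / (n j)%:R /\
    sqnorm2inf V <= mu2 * (\rank (unfold T j))%:R / (mdim n j)%:R.

Definition sqnorm2 (R : realType) (p : nat) (x : 'I_p -> R) : R :=
  \sum_(a < p) x a ^+ 2.
Definition norm2 (R : realType) (p : nat) (x : 'I_p -> R) : R :=
  Num.sqrt (sqnorm2 x).
Definition sqnorminf (R : realType) (p : nat) (x : 'I_p -> R) : R :=
  \big[Num.max/0]_(a < p) x a ^+ 2.
Definition dotv (R : realType) (p : nat) (x y : 'I_p -> R) : R :=
  \sum_(a < p) x a * y a.

From HB Require Import structures.
From mathcomp Require Import all_boot all_order all_algebra.
From mathcomp Require Import reals ring lra.
Import Order.TTheory GRing.Theory Num.Theory.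
Local Open Scope ring_scope.
Set Implicit Arguments. Unset Strict Implicit. Unset Printing Implicit Defensive.

(* The mode-[j] unfolding factors as [X Y^T], where the columns of
   [X] are the [x_i^(j)] and those of [Y] the outer products of the [x_i^(l)],
   [l != j].  The coherence hypotheses with [r mu / n_j <= 1/2] make both Gram
   matrices diagonally dominant, whence the lower Riesz bound
   [|X c|^2 >= 1/2 sum_i c_i^2 |X_i|^2] (for [Y] the coherences multiply, so
   [k >= 2] keeps the constant small).  Thus [X] and [Y] have rank [r], so does
   the unfolding, and its left singular vectors [U = X C] satisfy
   [|U_a|^2 <= 2 sum_i X_ai^2 / |X_i|^2 <= 2 mu r / n_j]; the same argument for
   the transpose bounds [V] with [mu^(k-1) / m_j]. *)

Lemma cross_term_ge (R : realFieldType) (e d c c' q q' : R) :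
  0 <= e -> 0 <= q -> 0 <= q' -> d ^+ 2 <= e ^+ 2 * q * q' ->
  - (e / 2 * (c ^+ 2 * q + c' ^+ 2 * q')) <= c * c' * d.
Proof.
move=> e0 q0 q'0 hd.
set w := c ^+ 2 * q; set w' := c' ^+ 2 * q'.
have w0 : 0 <= w by rewrite mulr_ge0 ?sqr_ge0.
have w'0 : 0 <= w' by rewrite mulr_ge0 ?sqr_ge0.
have amgm : w * w' <= ((w + w') / 2) ^+ 2.
  have -> : ((w + w') / 2) ^+ 2 = w * w' + ((w - w') / 2) ^+ 2 by field.
  by rewrite lerDl sqr_ge0.
have hsq : (c * c' * d) ^+ 2 <= e ^+ 2 * (w * w').
  have -> : (c * c' * d) ^+ 2 = c ^+ 2 * c' ^+ 2 * d ^+ 2 by ring.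
  have -> : e ^+ 2 * (w * w') = c ^+ 2 * c' ^+ 2 * (e ^+ 2 * q * q').
    by rewrite /w /w'; ring.
  by apply: ler_wpM2l hd; rewrite mulr_ge0 ?sqr_ge0.
have -> : e / 2 * (w + w') = e * ((w + w') / 2) by field.
have : (c * c' * d) ^+ 2 <= (e * ((w + w') / 2)) ^+ 2.
  by rewrite [leRHS]exprMn; apply: le_trans hsq _; apply: ler_wpM2l amgm; apply: sqr_ge0.
have : 0 <= e * ((w + w') / 2) by rewrite mulr_ge0 // divr_ge0 ?addr_ge0.
nra.
Qed.

Lemma amgm_div (R : realFieldType) (x y q : R) : 0 < q ->
  2 * (x * y) <= 2 * (x ^+ 2 / q) + y ^+ 2 * q / 2.
Proof.
move=> q0; rewrite -subr_ge0.
have -> : 2 * (x ^+ 2 / q) + y ^+ 2 * q / 2 - 2 * (x * y)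
    = (2 * (x / q) - y) ^+ 2 * q / 2 by field; rewrite gt_eqF.
by rewrite divr_ge0 // mulr_ge0 ?sqr_ge0 // ltW.
Qed.

Lemma prodr_le_factor (R : numDomainType) (I : finType) (P : pred I) (e : I -> R) l0 :
  (forall l, P l -> 0 <= e l <= 1) -> P l0 -> \prod_(l | P l) e l <= e l0.
Proof.
move=> e01 Pl0; rewrite (bigD1 l0) //= -[leRHS]mulr1.
have /andP[e0 _] := e01 l0 Pl0.
apply: ler_wpM2l => //; apply: prodr_ile1 => l /andP[Pl _]; exact: e01.
Qed.

Lemma exists_ord_neq k (j : 'I_k) : (1 < k)%N -> exists l : 'I_k, l != j.
Proof.
move=> k_gt1; have k_gt0 : (0 < k)%N by apply: ltn_trans k_gt1.
have [e | ne] := eqVneq (Ordinal k_gt0) j; last by exists (Ordinal k_gt0).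
by exists (Ordinal k_gt1); rewrite -e.
Qed.

Lemma sum_dffun {R : comPzSemiRingType} {I : finType} {d : I -> nat}
    (F : forall i, 'I_(d i) -> R) :
  \sum_(f : {dffun forall i, 'I_(d i)}) \prod_i F i (f i) =
  \prod_i \sum_(t : 'I_(d i)) F i t.
Proof.
rewrite (reindex (@dffun_of_fprod I (fun i => 'I_(d i)))) /=; last first.
  exact/onW_bij/dffun_of_fprod_bij.
pose P_ i := [ffun t : 'I_(d i) => F i t].
transitivity (\sum_(t : fprod (fun i => 'I_(d i))) \prod_(i in I) P_ i (t i)).
  by apply: eq_bigr => t _; apply: eq_bigr => i _; rewrite !ffunE.
rewrite (big_fprod 1 +%R P_).
transitivity (\prod_i \sum_(t in tagged_with (fun i => 'I_(d i)) i) untag 0 (P_ i) t).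
  by rewrite bigA_distr_big_dep.
by apply: eq_bigr => i _; rewrite -(big_tag P_); apply: eq_bigr => t _; rewrite ffunE.
Qed.

Lemma sum_cast_ord {R : nmodType} {m m'} (e : m = m') (F : 'I_m' -> R) :
  \sum_(t < m) F (cast_ord e t) = \sum_(a < m') F a.
Proof. by case: m' / e F => F; apply: eq_bigr => t _; rewrite cast_ord_id. Qed.

(* For [p = 0] the bound is [c / 0 = 0], which is also the empty maximum. *)
Lemma bigmax_le_divn (R : realFieldType) p (f : 'I_p -> R) (c : R) :
  (forall a, 0 <= f a <= c / p%:R) -> \big[Num.max/0]_a f a <= c / p%:R.
Proof.
case: p f => [|p] f hf; first by rewrite big_ord0 invr0 mulr0.
have /andP[f0 fc] := hf ord0.
by apply: bigmax_le => [|a _]; [apply: le_trans f0 fc | case/andP: (hf a)].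
Qed.

Lemma sqnorm2_gt0 (R : realType) p (v : 'I_p -> R) : (exists a, v a != 0) -> 0 < sqnorm2 v.
Proof.
case=> a va; rewrite /sqnorm2 (bigD1 a) //= ltr_pwDl ?exprn_even_gt0 ?va //.
by apply: sumr_ge0 => b _; apply: sqr_ge0.
Qed.

Lemma sqr_le_sqnorminf (R : realType) p (v : 'I_p -> R) a : v a ^+ 2 <= sqnorminf v.
Proof. exact: (le_bigmax 0 (fun a => v a ^+ 2) a). Qed.

Lemma dotvv (R : realType) p (v : 'I_p -> R) : dotv v v = sqnorm2 v.
Proof. by apply: eq_bigr => a _; rewrite expr2. Qed.

Section NearOrthogonalColumns.
Variables (R : realType) (p r : nat) (X : 'M[R]_(p, r)).

Definition lower_riesz := forall c : 'cV[R]_r,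
  \sum_i c i 0 ^+ 2 * sqnorm2 (X^~ i) <= 2 * \sum_a (X *m c) a 0 ^+ 2.

Lemma sqnorm_mulmx_col (c : 'cV[R]_r) :
  \sum_a (X *m c) a 0 ^+ 2 =
  \sum_i \sum_i' c i 0 * c i' 0 * dotv (X^~ i) (X^~ i').
Proof.
transitivity (\sum_a \sum_i \sum_i' (X a i * c i 0) * (X a i' * c i' 0)).
  apply: eq_bigr => a _; rewrite mxE expr2 big_distrl.
  by apply: eq_bigr => i _; rewrite big_distrr.
rewrite exchange_big; apply: eq_bigr => i _; rewrite exchange_big.
apply: eq_bigr => i' _; rewrite /dotv big_distrr; apply: eq_bigr => a _ /=.
ring.
Qed.

(* Diagonal dominance of the Gram matrix: with [w_i = c_i^2 |X_i|^2], each
   off-diagonal term of [c^T X^T X c] is at least [- eps (w_i + w_i') / 2];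
   summing these bounds (harmlessly also on the diagonal) gives
   [|X c|^2 >= (1 - r eps) sum_i w_i]. *)
Lemma near_orthogonal_lower_riesz (eps : R) :
  0 <= eps -> r%:R * eps <= 1 / 2 ->
  (forall i i', i != i' ->
     dotv (X^~ i) (X^~ i') ^+ 2 <= eps ^+ 2 * sqnorm2 (X^~ i) * sqnorm2 (X^~ i')) ->
  lower_riesz.
Proof.
move=> eps0 epsr hdot c; rewrite sqnorm_mulmx_col.
pose w i := c i 0 ^+ 2 * sqnorm2 (X^~ i).
have q0 i : 0 <= sqnorm2 (X^~ i) by apply: sumr_ge0 => a _; apply: sqr_ge0.
have w0 i : 0 <= w i by rewrite mulr_ge0 ?sqr_ge0.
have entry_ge i i' : (if i' == i then w i else 0) - eps / 2 * (w i + w i')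
    <= c i 0 * c i' 0 * dotv (X^~ i) (X^~ i').
  have [-> | ne] := eqVneq i' i.
    rewrite dotvv -expr2 -/(w i); have := mulr_ge0 eps0 (w0 i); lra.
  by rewrite sub0r; apply: cross_term_ge; rewrite ?hdot // eq_sym.
set S := \sum_i w i.
have S0 : 0 <= S by apply: sumr_ge0.
have row_sum i : \sum_i' ((if i' == i then w i else 0) - eps / 2 * (w i + w i'))
    = w i - eps / 2 * (r%:R * w i + S).
  rewrite sumrB -big_mkcond big_pred1_eq -mulr_sumr big_split /=.
  by rewrite sumr_const card_ord mulr_natl.
have lb : \sum_i \sum_i' ((if i' == i then w i else 0) - eps / 2 * (w i + w i'))
    <= \sum_i \sum_i' c i 0 * c i' 0 * dotv (X^~ i) (X^~ i').
  by apply: ler_sum => i _; apply: ler_sum => i' _; apply: entry_ge.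
move: lb; rewrite (eq_bigr _ (fun i _ => row_sum i)) sumrB -mulr_sumr big_split /=.
rewrite -mulr_sumr -/S sumr_const card_ord -mulr_natl; move: S0 epsr; nra.
Qed.

Hypothesis col_sqnorm_gt0 : forall i, 0 < sqnorm2 (X^~ i).
Hypothesis X_lower_riesz : lower_riesz.

Lemma lower_riesz_mulmx_eq0 (c : 'cV[R]_r) : X *m c = 0 -> c = 0.
Proof.
move=> Xc0; have := X_lower_riesz c; rewrite Xc0.
have -> : \sum_a (0 : 'cV[R]_p) a 0 ^+ 2 = 0.
  by apply: big1 => a _; rewrite mxE expr2 mulr0.
rewrite mulr0 => hle.
have nn l : 0 <= c l 0 ^+ 2 * sqnorm2 (X^~ l).
  by rewrite mulr_ge0 ?sqr_ge0 ?ltW.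
have sum0 : \sum_l c l 0 ^+ 2 * sqnorm2 (X^~ l) = 0.
  by apply/eqP; rewrite eq_le hle sumr_ge0.
apply/matrixP => i z; rewrite ord1 mxE.
have /eqP := psumr_eq0P (fun l _ => nn l) sum0 (i := i) isT.
by rewrite mulf_eq0 (gt_eqF (col_sqnorm_gt0 i)) orbF sqrf_eq0 => /eqP.
Qed.

Lemma lower_riesz_row_free : row_free X^T.
Proof.
rewrite -kermx_eq0; apply/eqP/matrixP => i l.
have Kc0 : X *m (row i (kermx X^T))^T = 0.
  by rewrite -[X]trmxK -trmx_mul trmxK -row_mul mulmx_ker row0 trmx0.
by have := congr1 (fun M : 'cV[R]_r => M l 0) (lower_riesz_mulmx_eq0 Kc0); rewrite !mxE.
Qed.

(* With [u] the [a]-th row of [U] and [c = C u^T], the vector [X c = U u^T] has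
   [a]-th entry and squared norm both equal to [|u|^2], as [U^T U = 1];
   AM-GM on [|u|^2 = sum_i X_ai c_i] and the lower Riesz bound conclude. *)
Lemma lower_riesz_row_sqnorm rho (U : 'M[R]_(p, rho)) (C : 'M[R]_(r, rho)) a :
  U^T *m U = 1%:M -> U = X *m C ->
  \sum_b U a b ^+ 2 <= 2 * \sum_i X a i ^+ 2 / sqnorm2 (X^~ i).
Proof.
move=> UtU UXC; set s := \sum_b U a b ^+ 2.
pose c := C *m (row a U)^T.
have Xc : X *m c = U *m (row a U)^T by rewrite mulmxA -UXC.
have Xc_a : \sum_i X a i * c i 0 = s.
  have := congr1 (fun M : 'cV[R]_p => M a 0) Xc; rewrite !mxE => ->.
  by apply: eq_bigr => b _; rewrite !mxE expr2.
have Xc_sqnorm : \sum_a' (X *m c) a' 0 ^+ 2 = s.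
  transitivity (((X *m c)^T *m (X *m c)) 0 0).
    by rewrite mxE; apply: eq_bigr => a' _; rewrite !mxE expr2.
  rewrite Xc trmx_mul trmxK mulmxA -(mulmxA _ U^T) UtU mulmx1 mxE.
  by apply: eq_bigr => b _; rewrite !mxE expr2.
have := X_lower_riesz c; rewrite Xc_sqnorm => hc.
have : \sum_i 2 * (X a i * c i 0) <=
    \sum_i (2 * (X a i ^+ 2 / sqnorm2 (X^~ i)) + c i 0 ^+ 2 * sqnorm2 (X^~ i) / 2).
  by apply: ler_sum => i _; apply: amgm_div.
rewrite -mulr_sumr Xc_a big_split /= -mulr_sumr -mulr_suml.
move: hc; lra.
Qed.

End NearOrthogonalColumns.

Lemma compact_svd_left (R : realType) p q rho (A : 'M[R]_(p, q)) (U : 'M[R]_(p, rho))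
    (s : 'rV[R]_rho) (V : 'M[R]_(q, rho)) :
  compact_svd A U s V -> U = A *m (V *m diag_mx (\row_i (s 0 i)^-1)).
Proof.
case=> _ VtV s_gt0 ->; rewrite -!mulmxA (mulmxA V^T) VtV mul1mx mulmxA.
rewrite !mul_mx_diag; apply/matrixP => i b; rewrite !mxE.
by rewrite mulrK // unitfE gt_eqF.
Qed.

Lemma compact_svd_trmx (R : realType) p q rho (A : 'M[R]_(p, q)) (U : 'M[R]_(p, rho))
    (s : 'rV[R]_rho) (V : 'M[R]_(q, rho)) :
  compact_svd A U s V -> compact_svd A^T V s U.
Proof.
by case=> UtU VtV s_gt0 ->; split; rewrite // !trmx_mul trmxK tr_diag_mx mulmxA.
Qed.

Section FactoredSVD.
Variables (R : realType) (p q r : nat) (X : 'M[R]_(p, r)) (Y : 'M[R]_(q, r)).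
Hypotheses (X_col_gt0 : forall i, 0 < sqnorm2 (X^~ i)) (X_riesz : lower_riesz X).

Lemma sqnorm2inf_compact_svd_left (A : 'M[R]_(p, q)) rho (U : 'M[R]_(p, rho))
    (s : 'rV[R]_rho) (V : 'M[R]_(q, rho)) (m : R) :
  A = X *m Y^T -> compact_svd A U s V ->
  (forall a i, X a i ^+ 2 / sqnorm2 (X^~ i) <= m / p%:R) ->
  sqnorm2inf U <= 2 * m * r%:R / p%:R.
Proof.
move=> -> svdA X_coh; apply: bigmax_le_divn => a; apply/andP; split.
  by apply: sumr_ge0 => b _; apply: sqr_ge0.
have UXC : U = X *m (Y^T *m (V *m diag_mx (\row_i (s 0 i)^-1))).
  by rewrite mulmxA; apply: compact_svd_left.
apply: le_trans (lower_riesz_row_sqnorm X_col_gt0 X_riesz a _ UXC) _.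
  by case: svdA.
have : \sum_i X a i ^+ 2 / sqnorm2 (X^~ i) <= \sum_(i < r) m / p%:R.
  by apply: ler_sum => i _; apply: X_coh.
rewrite sumr_const card_ord -[_ *+ r]mulr_natl => h.
have -> : 2 * m * r%:R / p%:R = 2 * (r%:R * (m / p%:R)) by ring.
by rewrite ler_pM2l.
Qed.

Hypotheses (Y_col_gt0 : forall i, 0 < sqnorm2 (Y^~ i)) (Y_riesz : lower_riesz Y).

Lemma mxrank_mulmx_lower_riesz : \rank (X *m Y^T) = r.
Proof.
rewrite mxrankMfree; last exact: lower_riesz_row_free.
by rewrite -mxrank_tr; apply/eqP/lower_riesz_row_free.
Qed.

End FactoredSVD.

Unset Implicit Arguments.

Section Unfolding.
Context {R : realType} {k : nat} {n : 'I_k -> nat}.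

(* A column index of the mode-[j] unfolding has a dummy [j]-th coordinate in
   ['I_1], which contributes the factor [1]. *)
Definition compl_factor (j : 'I_k) (G : forall l, 'I_(n l) -> R) (l : 'I_k) :
    'I_(if l == j then 1%N else n l) -> R :=
  if l == j as b return 'I_(if b then 1%N else n l) -> R then fun=> 1 else G l.

Definition outer_compl (j : 'I_k) (G : forall l, 'I_(n l) -> R) (c : colidx n j) : R :=
  \prod_l compl_factor j G l (c l).

Lemma compl_factor_id j G t : compl_factor j G j t = 1.
Proof. by move: t (eqxx j); rewrite /compl_factor; case: (j == j). Qed.

Lemma compl_factor_neq j G l (ne : j != l) t :
  compl_factor j G l t = G l (cast_ord (colidx_dim n ne) t).
Proof.
have lj : (l == j) = false by rewrite eq_sym; apply: negbTE.
move: t (colidx_dim n ne); rewrite /compl_factor.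
move: (l == j) lj => _ -> t e.
by congr (G l _); apply: val_inj.
Qed.

Lemma ins_idx_id j (a : 'I_(n j)) (c : colidx n j) : ins_idx a c j = a.
Proof.
rewrite /ins_idx; destruct (eqVneq j j) as [e | ne]; last by case/eqP: (ne).
by rewrite (eq_axiomK e).
Qed.

Lemma ins_idx_neq j (a : 'I_(n j)) (c : colidx n j) l (ne : j != l) :
  ins_idx a c l = cast_ord (colidx_dim n ne) (c l).
Proof.
rewrite /ins_idx; destruct (eqVneq j l) as [e | ne']; last by apply: val_inj.
by case/eqP: (ne).
Qed.

Lemma prod_ins_idx j (G : forall l, 'I_(n l) -> R) a (c : colidx n j) :
  \prod_l G l (ins_idx a c l) = G j a * outer_compl j G c.
Proof.
rewrite /outer_compl (bigD1 j) //= [in RHS](bigD1 j) //= compl_factor_id.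
rewrite ins_idx_id mul1r; congr (_ * _); apply: eq_bigr => l lj.
by rewrite eq_sym in lj; rewrite ins_idx_neq compl_factor_neq.
Qed.

Lemma compl_factor_le j (G : forall l, 'I_(n l) -> R) (B : 'I_k -> R) l t :
  (j != l -> forall a, 0 <= G l a <= B l) ->
  0 <= compl_factor j G l t <= (if l != j then B l else 1).
Proof.
move: t; case: (j =P l) => [<- | /eqP ne] t.
  by rewrite compl_factor_id eqxx ler01 lexx.
have -> : (if l != j then B l else 1) = B l by rewrite eq_sym ne.
by rewrite compl_factor_neq => /(_ isT).
Qed.

Lemma outer_complM j (G G' : forall l, 'I_(n l) -> R) (c : colidx n j) :
  outer_compl j G c * outer_compl j G' c = outer_compl j (fun l a => G l a * G' l a) c.
Proof.
rewrite /outer_compl -big_split /=; apply: eq_bigr => l _.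
have [<- | ne] := eqVneq j l; first by rewrite !compl_factor_id mulr1.
by rewrite !compl_factor_neq.
Qed.

Lemma outer_compl_le j (G : forall l, 'I_(n l) -> R) (B : 'I_k -> R) (c : colidx n j) :
  (forall l, j != l -> forall a, 0 <= G l a <= B l) ->
  outer_compl j G c <= \prod_(l | l != j) B l.
Proof.
move=> hG; rewrite big_mkcond; apply: ler_prod => l _.
exact: compl_factor_le _ _ _ (hG l).
Qed.

Lemma sum_outer_compl j (G : forall l, 'I_(n l) -> R) :
  \sum_(c : colidx n j) outer_compl j G c = \prod_(l | l != j) \sum_a G l a.
Proof.
rewrite (sum_dffun (fun l => compl_factor j G l)) [RHS]big_mkcond.
apply: eq_bigr => l _; case: (j =P l) => [<- | /eqP ne].
  by rewrite (eq_bigr _ (fun t _ => compl_factor_id j G t)) sumr_const card_ord eqxx.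
have -> : (if l != j then \sum_a G l a else 1) = \sum_a G l a by rewrite eq_sym ne.
by rewrite (eq_bigr _ (fun t _ => compl_factor_neq j G l ne t)) sum_cast_ord.
Qed.

Definition colidx_of j (b : 'I_(mdim n j)) : colidx n j :=
  enum_val (cast_ord (esym (card_colidx n j)) b).

Lemma sum_colidx_of j (F : colidx n j -> R) :
  \sum_b F (colidx_of j b) = \sum_c F c.
Proof. by rewrite (sum_cast_ord _ (fun b => F (enum_val b))) -big_enum_val. Qed.

Context {r : nat} (x : 'I_r -> forall l, 'I_(n l) -> R).

Definition mode_factor j : 'M[R]_(n j, r) := \matrix_(a, i) x i j a.

Definition compl_mode_factor j : 'M[R]_(mdim n j, r) :=
  \matrix_(b, i) outer_compl j (x i) (colidx_of j b).

Lemma unfold_cp (T : tensor R n) j :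
  (forall idx : midx n, T idx = \sum_i \prod_l x i l (idx l)) ->
  unfold T j = mode_factor j *m (compl_mode_factor j)^T.
Proof.
move=> hT; apply/matrixP => a b; rewrite !mxE hT; apply: eq_bigr => i _.
by rewrite prod_ins_idx !mxE.
Qed.

Lemma dotv_mode_factor j i i' :
  dotv ((mode_factor j)^~ i) ((mode_factor j)^~ i') = dotv (x i j) (x i' j).
Proof. by apply: eq_bigr => a _; rewrite !mxE. Qed.

Lemma sqnorm2_mode_factor j i : sqnorm2 ((mode_factor j)^~ i) = sqnorm2 (x i j).
Proof. by rewrite -!dotvv dotv_mode_factor. Qed.

Lemma dotv_compl_mode_factor j i i' :
  dotv ((compl_mode_factor j)^~ i) ((compl_mode_factor j)^~ i') =
  \prod_(l | l != j) dotv (x i l) (x i' l).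
Proof.
rewrite -sum_outer_compl -(sum_colidx_of j (outer_compl j _)).
by apply: eq_bigr => b _; rewrite !mxE outer_complM.
Qed.

Lemma sqnorm2_compl_mode_factor j i :
  sqnorm2 ((compl_mode_factor j)^~ i) = \prod_(l | l != j) sqnorm2 (x i l).
Proof.
by rewrite -dotvv dotv_compl_mode_factor; apply: eq_bigr => l _; rewrite dotvv.
Qed.

End Unfolding.

Section CPIncoherence.
Context {R : realType} {k : nat} {n : 'I_k -> nat} {r : nat}.
Context {x : 'I_r -> forall j : 'I_k, 'I_(n j) -> R} {mu : R}.
Hypothesis x_neq0 : forall (i : 'I_r) (j : 'I_k), exists a : 'I_(n j), x i j a != 0.
Hypothesis r_mu_le : forall j : 'I_k, r%:R * mu <= (n j)%:R / 2.
Hypothesis x_spread : forall (j : 'I_k) (i : 'I_r),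
  sqnorminf (x i j) / sqnorm2 (x i j) <= mu / (n j)%:R.
Hypothesis x_incoherent : forall (j : 'I_k) (i i' : 'I_r), i != i' ->
  `|dotv (x i j) (x i' j)| / (norm2 (x i j) * norm2 (x i' j)) <= mu / (n j)%:R.

(* Clipped at [0]: for [r = 0] nothing forces [mu >= 0]. *)
Let eps (l : 'I_k) := Num.max 0 (mu / (n l)%:R).

Lemma x_sqnorm_gt0 i l : 0 < sqnorm2 (x i l).
Proof. exact/sqnorm2_gt0/x_neq0. Qed.

Lemma eps_ge0 l : 0 <= eps l.
Proof. by rewrite le_max lexx. Qed.

Lemma r_eps_le l : r%:R * eps l <= 1 / 2.
Proof.
rewrite /eps; have [mu_le0 | mu_gt0] := leP (mu / (n l)%:R) 0.
  by rewrite mulr0 divr_ge0 ?ler01 ?ler0n.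
have n_gt0 : 0 < (n l)%:R :> R.
  by rewrite ltr0n lt0n; apply: contraTneq mu_gt0 => ->; rewrite invr0 mulr0 ltxx.
by rewrite mulrA ler_pdivrMr //; have := r_mu_le l; lra.
Qed.

Lemma x_entry_le l i a : x i l a ^+ 2 <= mu / (n l)%:R * sqnorm2 (x i l).
Proof.
rewrite -ler_pdivrMr ?x_sqnorm_gt0 //; apply: le_trans (x_spread l i).
apply: ler_wpM2r; last exact: sqr_le_sqnorminf.
by rewrite invr_ge0 ltW ?x_sqnorm_gt0.
Qed.

Lemma x_near_orthogonal l i i' : i != i' ->
  dotv (x i l) (x i' l) ^+ 2 <= eps l ^+ 2 * sqnorm2 (x i l) * sqnorm2 (x i' l).
Proof.
move=> ii'; set N := norm2 (x i l) * norm2 (x i' l).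
have N_gt0 : 0 < N by rewrite mulr_gt0 // sqrtr_gt0 x_sqnorm_gt0.
have : `|dotv (x i l) (x i' l)| <= eps l * N.
  rewrite -ler_pdivrMr //; apply: le_trans (x_incoherent l i i' ii') _.
  by rewrite le_max lexx orbT.
rewrite -real_normK ?num_real // -[_ * _ * _]mulrA.
have -> : sqnorm2 (x i l) * sqnorm2 (x i' l) = N ^+ 2.
  by rewrite exprMn !sqr_sqrtr // ltW ?x_sqnorm_gt0.
rewrite -exprMn => h; apply: lerXn2r; rewrite ?nnegrE ?normr_ge0 //.
by rewrite mulr_ge0 ?eps_ge0 ?ltW.
Qed.

Lemma mode_factor_lower_riesz j : lower_riesz (mode_factor x j).
Proof.
apply: (near_orthogonal_lower_riesz (eps_ge0 j) (r_eps_le j)) => i i' ii'.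
by rewrite dotv_mode_factor !sqnorm2_mode_factor x_near_orthogonal.
Qed.

(* The Gram entries of the complementary factor are products over the modes
   [l != j], so its near-orthogonality constant is [prod_(l != j) eps l], which is
   at most [eps l0] for any [l0 != j] since every [eps l <= 1 / (2 r)]. *)
Lemma compl_mode_factor_lower_riesz j : (1 < k)%N -> lower_riesz (compl_mode_factor x j).
Proof.
move=> k_gt1; pose epsY := \prod_(l | l != j) eps l.
have epsY_ge0 : 0 <= epsY by apply: prodr_ge0 => l _; apply: eps_ge0.
apply: (near_orthogonal_lower_riesz epsY_ge0).
  have [l0 l0j] := exists_ord_neq j k_gt1.
  have [-> | r_gt0] := posnP r; first by rewrite mul0r divr_ge0 ?ler01 ?ler0n.
  apply: le_trans (r_eps_le l0); apply: ler_wpM2l; first exact: ler0n.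
  rewrite /epsY; apply: prodr_le_factor => [l _ | //]; rewrite eps_ge0 /=.
  have := r_eps_le l; have := eps_ge0 l; have : 1 <= r%:R :> R by rewrite ler1n.
  nra.
move=> i i' ii'; rewrite dotv_compl_mode_factor !sqnorm2_compl_mode_factor.
rewrite /epsY -!prodrXl -!big_split /=; apply: ler_prod => l _.
by rewrite sqr_ge0 x_near_orthogonal.
Qed.

Lemma mode_factor_coherence j a i :
  mode_factor x j a i ^+ 2 / sqnorm2 ((mode_factor x j)^~ i) <= mu / (n j)%:R.
Proof. by rewrite sqnorm2_mode_factor mxE ler_pdivrMr ?x_sqnorm_gt0 ?x_entry_le. Qed.

Lemma compl_mode_factor_coherence j b i :
  compl_mode_factor x j b i ^+ 2 / sqnorm2 ((compl_mode_factor x j)^~ i)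
    <= mu ^+ k.-1 / (mdim n j)%:R.
Proof.
rewrite sqnorm2_compl_mode_factor ler_pdivrMr; last first.
  by apply: prodr_gt0 => l _; apply: x_sqnorm_gt0.
have -> : mu ^+ k.-1 / (mdim n j)%:R = \prod_(l | l != j) (mu / (n l)%:R).
  rewrite prodf_div /mdim natr_prod; congr (_ / _).
  by rewrite -[RHS]/(\prod_(l in predC1 j) mu) prodr_const cardC1 card_ord.
rewrite -big_split /= mxE expr2 outer_complM; apply: outer_compl_le => l jl a.
by rewrite -expr2 sqr_ge0 x_entry_le.
Qed.

End CPIncoherence.

Theorem lemma2p3 (R : realType) (k : nat) (n : 'I_k -> nat) (r : nat)
    (T : tensor R n)
    (x : 'I_r -> forall j : 'I_k, 'I_(n j) -> R)
    (mu : R) :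
  (2 <= k)%N ->
  (forall (i : 'I_r) (j : 'I_k), exists a : 'I_(n j), x i j a != 0) ->
  (forall idx : midx n, T idx = \sum_(i < r) \prod_(j < k) x i j (idx j)) ->
  (forall j : 'I_k, r%:R * mu <= (n j)%:R / 2) ->
  (forall (j : 'I_k) (i : 'I_r),
      sqnorminf (x i j) / sqnorm2 (x i j) <= mu / (n j)%:R) ->
  (forall (j : 'I_k) (i i' : 'I_r), i != i' ->
      `|dotv (x i j) (x i' j)| / (norm2 (x i j) * norm2 (x i' j))
        <= mu / (n j)%:R) ->
  exists mu1 mu2 : R,
    [/\ incoherent T mu1 mu2, mu1 <= 2 * mu & mu2 <= 2 * mu ^+ k.-1].
Proof.
move=> k_gt1 x_neq0 T_cp r_mu_le x_spread x_incoherent.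
exists (2 * mu), (2 * mu ^+ k.-1); split => // j U s V svdT.
have unfoldE := unfold_cp x T j T_cp.
have X_gt0 i : 0 < sqnorm2 ((mode_factor x j)^~ i).
  by rewrite sqnorm2_mode_factor x_sqnorm_gt0.
have Y_gt0 i : 0 < sqnorm2 ((compl_mode_factor x j)^~ i).
  by rewrite sqnorm2_compl_mode_factor; apply: prodr_gt0 => l _; apply: x_sqnorm_gt0.
have X_riesz := mode_factor_lower_riesz x_neq0 r_mu_le x_incoherent j.
have Y_riesz := compl_mode_factor_lower_riesz x_neq0 r_mu_le x_incoherent j k_gt1.
have -> : (\rank (unfold T j))%:R = r%:R :> R.
  by rewrite unfoldE (mxrank_mulmx_lower_riesz X_gt0 X_riesz Y_gt0 Y_riesz).
split.
  apply: (sqnorm2inf_compact_svd_left X_gt0 X_riesz unfoldE svdT (m := mu)).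
  exact: mode_factor_coherence x_neq0 x_spread j.
have unfoldE' : (unfold T j)^T = compl_mode_factor x j *m (mode_factor x j)^T.
  by rewrite unfoldE trmx_mul trmxK.
apply: (sqnorm2inf_compact_svd_left Y_gt0 Y_riesz unfoldE' (compact_svd_trmx svdT)
  (m := mu ^+ k.-1)).
exact: compl_mode_factor_coherence x_neq0 x_spread j.
Qed.
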